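(* Let $\alpha=(\alpha_1,\dots,\alpha_t)\in\mathcal{P}(n)$, let $\alpha^*=(\gamma_1,\dots,\gamma_s)$ be its conjugate (so $s=\alpha_1$), let $\delta(\alpha)=(d_k)_{k\ge1}$, and let $r=t+s-1$. Then \[s(\alpha)+s(\alpha^* )=2\sum_{k=1}^r k\,d_k.\] Consequently, if $\alpha,\beta\in\mathcal{P}(n)$ satisfy $\delta(\alpha)=\delta(\beta)$, then $s(\alpha)+s(\alpha^* )=s(\beta)+s(\beta^* )$.
   Context: A partition of a positive integer $n$ is a finite non-increasing sequence $\alpha=(\alpha_1,\dots,\alpha_t)$ of positive integers with sum $n$; $\mathcal{P}(n)$ is the set of partitions of $n$, and $\alpha_i=0$ for $i>t$. The diagonal sequence is $\delta(\alpha)=(d_k)_{k\ge1}$ with $d_k=|\{i:1\le i\le k,\ \alpha_i+i-1\ge k\}|$. The conjugate $\alpha^*$ has parts $\alpha^*_j=|\{i:\alpha_i\ge j\}|$. For a partition $\alpha=(\alpha_1,\dots,\alpha_t)$, $s(\alpha)=\sum_{i=1}^t\alpha_i^2$. *)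

From mathcomp Require Import all_boot.
Set Implicit Arguments. Unset Strict Implicit. Unset Printing Implicit Defensive.

(* A partition is a finite non-increasing sequence of positive integers;
   alpha_i (1-based) is [part a i] = nth 0 a (i-1), and 0 for i > size a. *)
Definition is_partition (n : nat) (a : seq nat) : Prop :=
  [/\ sorted geq a, all (fun x => 0 < x) a & sumn a = n].

Definition part (a : seq nat) (i : nat) : nat := nth 0 a i.-1.

Definition diag (a : seq nat) (k : nat) : nat :=
  #|[set i : 'I_k.+1 | (1 <= i) && (k <= part a i + i - 1)]|.

Definition conj_part (a : seq nat) : seq nat :=
  [seq count (fun x => j <= x) a | j <- iota 1 (part a 1)].

Definition sq_sum (a : seq nat) : nat := \sum_(x <- a) x ^ 2.

From mathcomp Require Import all_boot zify.
Set Implicit Arguments. Unset Strict Implicit. Unset Printing Implicit Defensive.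

(* d_k counts the cells (i, j) of the Young diagram on the hook diagonal
   i + j - 1 = k, so 2 * sum_k k d_k sums (2i - 1) + (2j - 1) over all cells.
   Summed along a row, 2j - 1 gives alpha_i^2; summed down a column, 2i - 1
   gives alpha*_j^2.  Formally we induct on the rows: putting a row of length
   x on top shifts the diagonal sequence by one and adds 1 to d_1, ..., d_x. *)

Lemma diagE a k : diag a k = \sum_(0 <= i < k) (k <= nth 0 a i + i).
Proof.
rewrite /diag -sum1_card big_mkcond /= big_ord_recl /= in_set /=.
rewrite big_mkord; apply: eq_bigr => i _; rewrite in_set /= /part /bump /=.
by rewrite add1n /= addnS subn1 /=; case: (_ <= _).
Qed.

Lemma diag_nil k : diag [::] k = 0.
Proof.
rewrite diagE big_nat big1 // => i /andP[_ lt_ik].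
by rewrite nth_nil add0n leqNgt lt_ik.
Qed.

Lemma diag_cons x a k : diag (x :: a) k.+1 = (k < x) + diag a k.
Proof.
rewrite !diagE big_nat_recl // addn0; congr (_ + _).
by apply: eq_bigr => i _; rewrite /= addnS ltnS.
Qed.

Lemma sum_indicator_ltn x M : \sum_(0 <= k < M) (k < x) = minn x M.
Proof.
elim: M => [|M IH]; first by rewrite big_geq //; lia.
by rewrite big_nat_recr //= IH; case: (ltnP M x) => ?; lia.
Qed.

Lemma sum_succ_indicator_ltn x M :
  2 * \sum_(0 <= k < M) k.+1 * (k < x) = minn x M * (minn x M).+1.
Proof.
elim: M => [|M IH]; first by rewrite big_geq //; lia.
by rewrite big_nat_recr //= mulnDr IH; case: (ltnP M x) => ?; nia.
Qed.

Lemma sum_count_gtn m s : all (fun y => y <= m) s ->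
  \sum_(0 <= j < m) count (fun y => j < y) s = sumn s.
Proof.
elim: s => [|y s IH] /=; first by rewrite big1.
case/andP => le_ym le_sm; rewrite big_split /= sum_indicator_ltn IH //; lia.
Qed.

Lemma sorted_geq_head a : sorted geq a -> all (fun y => y <= head 0 a) a.
Proof.
case: a => [|x a] //= sorted_xa; rewrite leqnn.
exact: order_path_min (rev_trans leq_trans) sorted_xa.
Qed.

Lemma sq_sum_conj_part a :
  sq_sum (conj_part a) = \sum_(0 <= j < part a 1) count (fun y => j < y) a ^ 2.
Proof.
rewrite /sq_sum /conj_part big_map (iotaDl 1 0) big_map /index_iota subn0.
by apply: eq_bigr => j _; rewrite add1n.
Qed.

Lemma sum_diag m a N : all (fun y => y <= m) a -> size a + m <= N ->
  \sum_(0 <= k < N) diag a k = sumn a.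
Proof.
elim: a N => [|x a IH] N /=.
  by move=> _ _; rewrite big1 // => k _; rewrite diag_nil.
case/andP=> le_xm le_am; case: N => [|N] bound; first lia.
rewrite big_nat_recl // diagE big_geq // add0n.
under eq_bigr => k _ do rewrite diag_cons.
rewrite big_split /= sum_indicator_ltn IH //; lia.
Qed.

Lemma weighted_sum_diag m a N :
  sorted geq a -> all (fun y => y <= m) a -> size a + m <= N ->
  2 * \sum_(0 <= k < N) k * diag a k
  = sq_sum a + \sum_(0 <= j < m) count (fun y => j < y) a ^ 2.
Proof.
elim: a N => [|x a IH] N sorted_xa /=.
  move=> _ _; rewrite big1 => [|k _]; last by rewrite diag_nil muln0.
  by rewrite /sq_sum big_nil big1.
case/andP=> le_xm le_am; case: N => [|N] bound; first lia.
have /andP[_ le_ax] := sorted_geq_head sorted_xa.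
have sorted_a : sorted geq a := path_sorted sorted_xa.
(* The parts of [a] are at most [x], so the columns of [a] past [x] are empty. *)
have row_cross : \sum_(0 <= j < m) (j < x) * count (fun y => j < y) a = sumn a.
  rewrite -(sum_count_gtn le_am); apply: eq_bigr => j _.
  case: ltnP => [|le_xj]; rewrite ?mul1n // mul0n; apply/esym/eqP.
  rewrite -leqn0 leqNgt -has_count; apply/hasPn => y /(allP le_ax) /= le_yx.
  by rewrite -leqNgt (leq_trans le_yx).
have first_row : \sum_(0 <= k < N) k.+1 * diag (x :: a) k.+1
    = \sum_(0 <= k < N) k.+1 * (k < x) + \sum_(0 <= k < N) k * diag a k
      + \sum_(0 <= k < N) diag a k.
  by rewrite -!big_split; apply: eq_bigr => k _ /=; rewrite diag_cons; nia.
have columns : \sum_(0 <= j < m) count (fun y => j < y) (x :: a) ^ 2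
    = x + 2 * sumn a + \sum_(0 <= j < m) count (fun y => j < y) a ^ 2.
  rewrite -[X in X + _ + _](minn_idPl le_xm) -sum_indicator_ltn -row_cross.
  by rewrite big_distrr /= -!big_split; apply: eq_bigr => j _ /=; case: (j < x); nia.
rewrite big_nat_recl // mul0n add0n first_row !mulnDr sum_succ_indicator_ltn.
rewrite IH // (sum_diag le_am) ?columns; last lia.
by rewrite /sq_sum big_cons (minn_idPl _); lia.
Qed.

Lemma sq_sum_add_conj_part a N : sorted geq a -> size a + part a 1 <= N ->
  sq_sum a + sq_sum (conj_part a) = 2 * \sum_(0 <= k < N) k * diag a k.
Proof.
move=> sorted_a bound; rewrite sq_sum_conj_part.
by rewrite (weighted_sum_diag sorted_a (sorted_geq_head sorted_a) bound).
Qed.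

Theorem proposition2p9 :
  (forall (n : nat) (a : seq nat), 0 < n -> is_partition n a ->
     sq_sum a + sq_sum (conj_part a)
     = 2 * \sum_(1 <= k < (size a + part a 1 - 1).+1) k * diag a k)
  /\
  (forall (n : nat) (a b : seq nat), 0 < n -> is_partition n a -> is_partition n b ->
     (forall k, 1 <= k -> diag a k = diag b k) ->
     sq_sum a + sq_sum (conj_part a) = sq_sum b + sq_sum (conj_part b)).
Proof.
split=> [n a n_gt0 [sorted_a _ sum_a] | n a b _ [sorted_a _ _] [sorted_b _ _] eq_diag].
  have size_gt0 : 0 < size a by case: a sum_a {sorted_a} => //= sum0; lia.
  have -> : (size a + part a 1 - 1).+1 = size a + part a 1 by lia.
  rewrite (sq_sum_add_conj_part sorted_a (leqnn _)) (big_ltn (m := 0)) ?mul0n //.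
  by rewrite addn_gt0 size_gt0.
set N := size a + part a 1 + (size b + part b 1).
rewrite (sq_sum_add_conj_part (N := N) sorted_a) ?leq_addr //
  (sq_sum_add_conj_part (N := N) sorted_b) ?leq_addl //.
congr (2 * _); apply: eq_bigr => [[|k] _]; first by rewrite !mul0n.
by rewrite eq_diag.
Qed.
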